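(* Let $U$ be a nonempty finite set, $R\subseteq U\times U$ serial and transitive, and $cl$ the closure operator of $M(Reg(U,R))$. Let $n$ be an integer with $1\le n\le h(U)$, and let $X,Y\in Reg(U,R)$ with $h(X)=n$ and $h(Y)=n-1$. Then for every $Z\subseteq U$ with $Y\subsetneq Z\subsetneq X$, $cl(Z)=X$.
   Context: $R_s(x)=\{y\in U\mid xRy\}$; $\underline{R}(X)=\{x\mid R_s(x)\subseteq X\}$, $\overline{R}(X)=\{x\mid R_s(x)\cap X\neq\emptyset\}$; $X$ is regular if $X=\underline{R}(\overline{R}(X))$, and $Reg(U,R)$ is the lattice of regular sets under inclusion, with least element $\emptyset$. $h(A)$ is the length of a maximal chain in $[\emptyset,A]$. $M(Reg(U,R))$ is the matroid on $U$ with independent sets $\{X\subseteq U\mid h(Y)\ge|X\cap Y|\ \forall Y\in Reg(U,R)\}$, rank function $r(X)=\max\{|I|\mid I\subseteq X \text{ independent}\}$, and closure operator $cl(X)=\{u\in U\mid r(X\cup\{u\})=r(X)\}$. *)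

From mathcomp Require Import all_boot.
Set Implicit Arguments. Unset Strict Implicit. Unset Printing Implicit Defensive.

Section RoughSets.
Variables (T : finType) (R : rel T).

Definition Rs (x : T) : {set T} := [set y | R x y].
Definition lowerR (X : {set T}) : {set T} := [set x | Rs x \subset X].
Definition upperR (X : {set T}) : {set T} := [set x | Rs x :&: X != set0].
Definition regular (X : {set T}) : bool := X == lowerR (upperR X).

Definition chainIn (A : {set T}) (C : {set {set T}}) : bool :=
  [forall B in C, regular B && (B \subset A)] &&
  [forall B in C, forall D in C, (B \subset D) || (D \subset B)].

(* h(A): length (= number of elements - 1) of a longest (in particular,
   of a maximal) chain in the interval [set0, A] of Reg(U,R). *)
Definition h (A : {set T}) : nat :=
  (\max_(C : {set {set T}} | chainIn A C) #|C|).-1.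

Definition indep (X : {set T}) : bool :=
  [forall Y : {set T}, regular Y ==> (#|X :&: Y| <= h Y)].

Definition rank (X : {set T}) : nat :=
  \max_(I : {set T} | (I \subset X) && indep I) #|I|.

Definition cl (X : {set T}) : {set T} := [set u | rank (u |: X) == rank X].

End RoughSets.

From mathcomp Require Import all_boot zify.
Set Implicit Arguments. Unset Strict Implicit. Unset Printing Implicit Defensive.

(* For a serial transitive relation R, call t terminal when every successor
   of t reaches back to t, and fix one representative in each class of
   mutually related terminal points; let Reps be the set of them.  Every
   point reaches a representative, and a set W is regular iff it consists
   exactly of the points all of whose reachable representatives lie in W.
   Hence W |-> W :&: Reps is an isomorphism from Reg(U,R) onto the subsets
   of Reps, and h W = #|W :&: Reps| (chains count representatives).
   A set J that can be matched injectively into Reps along R is therefore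
   independent in M(Reg(U,R)), and such matchings extend by a point x lying
   outside a regular W containing J (x reaches a representative outside W).
   For Y < Z < X as in the theorem, picking z in Z \ Y gives the matchable
   set z |: (Y :&: Reps) of size h X inside Z, so rank Z = h X; adding a
   point u of X cannot raise the rank above h X, while adding u outside X
   extends the matching, so the rank grows: cl Z = X. *)

Section SerialTransitive.
Variables (T : finType) (R : rel T).
Hypothesis serialR : forall x : T, exists y, R x y.
Hypothesis transR : transitive R.

Definition terminal (t : T) : bool := [forall y, R t y ==> R y t].

Definition rep (t : T) : T := odflt t [pick y in Rs R t].

Definition Reps : {set T} := [set t | terminal t && (rep t == t)].

Lemma terminalP t : reflect (forall y, R t y -> R y t) (terminal t).
Proof. by apply: (iffP forallP) => Ht y; apply/implyP/Ht. Qed.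

Lemma terminal_refl t : terminal t -> R t t.
Proof. by move/terminalP=> Ht; have [y Rty] := serialR t; exact: transR Rty (Ht _ Rty). Qed.

Lemma terminal_rep t : terminal t -> R t (rep t).
Proof.
by move=> Ht; rewrite /rep; case: pickP => [y | /(_ t)]; rewrite inE ?terminal_refl.
Qed.

Lemma rep_eq t t' : terminal t -> R t t' -> rep t' = rep t.
Proof.
move=> Ht Rtt'; have Rt't : R t' t by move/terminalP: Ht; apply.
have sameRs : Rs R t' = Rs R t.
  by apply/setP => y; rewrite !inE; apply/idP/idP; apply: transR.
by rewrite /rep sameRs; case: pickP => [// | /(_ t)]; rewrite inE terminal_refl.
Qed.

(* Following R from any point eventually stays in a terminal class: take a
   successor with the fewest successors. *)
Lemma exists_terminal x : exists2 t, terminal t & R x t.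
Proof.
have [s0 Rxs0] := serialR x.
have [t0 Rxt0 minS] := arg_minnP (fun s => #|Rs R s|) Rxs0.
have [t Rt0t] := serialR t0; exists t; last exact: transR Rxt0 Rt0t.
apply/terminalP => v Rtv; have Rt0v := transR Rt0t Rtv.
have sRs : Rs R v \subset Rs R t0.
  by apply/subsetP => w; rewrite !inE; apply: transR.
have /eqP sameRs : Rs R v == Rs R t0 by rewrite eqEcard sRs minS // (transR Rxt0 Rt0v).
have : t \in Rs R t0 by rewrite inE.
by rewrite -sameRs inE.
Qed.

Lemma exists_rep x : exists2 r, r \in Reps & R x r.
Proof.
have [t Ht Rxt] := exists_terminal x; exists (rep t); last first.
  exact: transR Rxt (terminal_rep Ht).
have Rtr := terminal_rep Ht; have /terminalP backt := Ht.
rewrite inE (rep_eq Ht Rtr) eqxx andbT; apply/terminalP => y Rry.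
exact: transR (backt _ (transR Rtr Rry)) Rtr.
Qed.

Lemma Reps_terminal r y : r \in Reps -> R r y -> R y r.
Proof. by rewrite inE => /andP[/terminalP Hr _]; apply: Hr. Qed.

Lemma Reps_refl r : r \in Reps -> R r r.
Proof. by rewrite inE => /andP[/terminal_refl]. Qed.

Lemma Reps_uniq r r' : r \in Reps -> r' \in Reps -> R r r' -> r = r'.
Proof.
rewrite !inE => /andP[Hr /eqP rr] /andP[_ /eqP r'r'] Rrr'.
by rewrite -rr -r'r' (rep_eq Hr Rrr').
Qed.

Definition Gen (A : {set T}) : {set T} := [set x | [set r in Reps | R x r] \subset A].

Lemma GenP (A : {set T}) x : reflect (forall r, r \in Reps -> R x r -> r \in A) (x \in Gen A).
Proof.
rewrite inE; apply: (iffP subsetP) => [inA r Rr Rxr | inA r].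
  by apply: inA; rewrite inE Rr.
by rewrite inE => /andP[]; apply: inA.
Qed.

Lemma lower_upperP (W : {set T}) x :
  reflect (forall y, R x y -> exists2 w, w \in W & R y w) (x \in lowerR R (upperR R W)).
Proof.
rewrite inE; apply: (iffP subsetP) => [sub y Rxy | reach y].
  have := sub y; rewrite !inE Rxy => /(_ isT)/set0Pn[w].
  by rewrite !inE => /andP[Ryw Ww]; exists w.
rewrite !inE => /reach[w Ww Ryw]; apply/set0Pn; exists w; by rewrite !inE Ryw.
Qed.

Lemma regular_Gen (A : {set T}) : regular R (Gen A).
Proof.
apply/eqP/setP => x; apply/GenP/lower_upperP => [inA y Rxy | reach r Rr Rxr].
- have [r Rr Ryr] := exists_rep y; exists r => //; apply/GenP => r' Rr' Rrr'.
  by rewrite -(Reps_uniq Rr Rr' Rrr'); apply: inA Rr (transR Rxy Ryr).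
- have [w /GenP inA Rrw] := reach r Rxr.
  exact: inA r Rr (Reps_terminal Rr Rrw).
Qed.

Lemma Gen_regular (W : {set T}) : regular R W -> Gen (W :&: Reps) = W.
Proof.
move=> /eqP regW; apply/setP => x; rewrite [in RHS]regW.
apply/GenP/lower_upperP => [inW y Rxy | reach r Rr Rxr].
- have [r Rr Ryr] := exists_rep y; exists r => //.
  by have /setIP[] := inW r Rr (transR Rxy Ryr).
- rewrite inE Rr andbT regW; apply/lower_upperP => y Rry.
  have [w Ww Rrw] := reach r Rxr; exists w => //.
  exact: transR (Reps_terminal Rr Rry) Rrw.
Qed.

Lemma Gen_Reps (A : {set T}) : A \subset Reps -> Gen A :&: Reps = A.
Proof.
move=> AReps; apply/setP => r; rewrite inE.
apply/andP/idP => [[/GenP inA Rr] | Ar]; first exact: inA r Rr (Reps_refl Rr).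
have Rr := subsetP AReps r Ar; split=> //; apply/GenP => r' Rr' Rrr'.
by rewrite -(Reps_uniq Rr Rr' Rrr').
Qed.

Lemma Gen_mono (A A' : {set T}) : A \subset A' -> Gen A \subset Gen A'.
Proof.
by move=> sAA'; apply/subsetP => x /GenP inA; apply/GenP => r Rr /(inA r Rr)/(subsetP sAA').
Qed.

Lemma regular_reach (W : {set T}) x r : regular R W -> x \in W -> r \in Reps -> R x r -> r \in W.
Proof.
move=> regW; rewrite -{1}(Gen_regular regW) => /GenP inW Rr Rxr.
by have /setIP[] := inW r Rr Rxr.
Qed.

Lemma regular_escape (W : {set T}) x :
  regular R W -> x \notin W -> exists2 r, r \in Reps & R x r && (r \notin W).
Proof.
move=> regW; rewrite -{1}(Gen_regular regW) inE => /subsetPn[r].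
rewrite inE => /andP[Rr Rxr]; rewrite in_setI Rr andbT => notWr.
by exists r; rewrite ?Rxr.
Qed.

Lemma regular_eq_card (B D : {set T}) : regular R B -> regular R D -> B \subset D ->
  #|B :&: Reps| = #|D :&: Reps| -> B = D.
Proof.
move=> regB regD sBD cardBD.
have E : B :&: Reps = D :&: Reps by apply/eqP; rewrite eqEcard setSI //= cardBD.
by rewrite -(Gen_regular regB) -(Gen_regular regD) E.
Qed.

(* A chain below W has at most #|W :&: Reps| + 1 elements, because the
   number of representatives is injective along a chain. *)
Lemma h_ub (W : {set T}) : h R W <= #|W :&: Reps|.
Proof.
suff : \max_(C | chainIn R W C) #|C| <= #|W :&: Reps|.+1.
  by rewrite /h -subn1 leq_subLR add1n.
apply/bigmax_leqP => C /andP[/forall_inP inC /forall_inP cmpC].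
set m := #|W :&: Reps|.
have ltm B : B \in C -> #|B :&: Reps| < m.+1.
  by move=> CB; have /andP[_ sBW] := inC B CB; rewrite ltnS subset_leq_card ?setSI.
pose g B : 'I_m.+1 := inord #|B :&: Reps|.
have injg : {in C &, injective g}.
  move=> B D CB CD /(congr1 val); rewrite /g /= !inordK ?ltm // => cardBD.
  have [/andP[regB _] /andP[regD _]] := (inC B CB, inC D CD).
  have /forall_inP/(_ D CD)/orP[sBD | sDB] := cmpC B CB.
    exact: regular_eq_card.
  by apply/esym/regular_eq_card.
by rewrite -(card_in_imset injg) (leq_trans (max_card _)) ?card_ord.
Qed.

(* Gen A, Gen (A minus one point), ... is a chain of #|A| + 1 regular sets
   below Gen A; it shows that the bound of h_ub is attained. *)
Lemma Gen_chain m (A : {set T}) : A \subset Reps -> #|A| = m ->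
  exists2 C, chainIn R (Gen A) C & #|C| = m.+1.
Proof.
elim: m A => [|m IH] A AReps cardA.
  exists [set Gen A]; last exact: cards1.
  apply/andP; split; apply/forall_inP => B /set1P ->; first by rewrite regular_Gen subxx.
  by apply/forall_inP => D /set1P ->; rewrite subxx.
have [a Aa] : exists a, a \in A by apply/set0Pn; rewrite -card_gt0 cardA.
have cardA' : #|A :\ a| = m by move: cardA; rewrite (cardsD1 a A) Aa => -[].
have sA'Reps : A :\ a \subset Reps := subset_trans (subsetDl A [set a]) AReps.
have [C /andP[/forall_inP inC /forall_inP cmpC] cardC] := IH _ sA'Reps cardA'.
have sGen : Gen (A :\ a) \subset Gen A by apply/Gen_mono/subsetDl.
have belowA B : B \in C -> regular R B && (B \subset Gen A).
  by move=> CB; have /andP[-> sB] := inC B CB; apply: subset_trans sB sGen.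
have notCA : Gen A \notin C.
  apply/negP => /inC/andP[_ /(setSI Reps)]; rewrite !Gen_Reps //.
  by move/subsetP/(_ a Aa); rewrite setD11.
exists (Gen A |: C); last by rewrite cardsU1 notCA cardC.
apply/andP; split; apply/forall_inP => B /setU1P[-> | CB].
- by rewrite regular_Gen subxx.
- exact: belowA.
- by apply/forall_inP => D /setU1P[-> | /belowA/andP[_ ->]]; rewrite ?subxx ?orbT.
- apply/forall_inP => D /setU1P[-> | CD]; first by have /andP[_ ->] := belowA B CB.
  exact: (forall_inP (cmpC B CB)).
Qed.

Lemma h_lb (W : {set T}) : regular R W -> #|W :&: Reps| <= h R W.
Proof.
move=> regW; have [C chainC cardC] := Gen_chain (subsetIr W Reps) (erefl _).
rewrite (Gen_regular regW) in chainC.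
have := @leq_bigmax_cond _ (chainIn R W) (fun C : {set {set T}} => #|C|) _ chainC.
rewrite cardC /h => le; exact: leq_trans le (leqSpred _).
Qed.

Lemma h_reps (W : {set T}) : regular R W -> h R W = #|W :&: Reps|.
Proof. by move=> regW; apply/eqP; rewrite eqn_leq h_ub h_lb. Qed.

Definition matchable (J : {set T}) : Prop :=
  exists2 f : T -> T, {in J &, injective f} & {in J, forall x, (f x \in Reps) && R x (f x)}.

(* A matching sends J :&: W into W :&: Reps, whose size is h W. *)
Lemma matchable_indep (J : {set T}) : matchable J -> indep R J.
Proof.
case=> f injf fJ; apply/forall_inP => W regW; rewrite h_reps //.
have injfW : {in J :&: W &, injective f}.
  by move=> x y /setIP[Jx _] /setIP[Jy _]; apply: injf.
rewrite -(card_in_imset injfW); apply/subset_leq_card/subsetP => _ /imsetP[x /setIP[Jx Wx] ->].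
have /andP[Rfx Rxfx] := fJ x Jx.
by rewrite inE Rfx (regular_reach regW Wx Rfx Rxfx).
Qed.

Lemma matchable_reps (A : {set T}) : A \subset Reps -> matchable A.
Proof.
move=> AReps; exists id => // r Ar /=.
by have Rr := subsetP AReps r Ar; rewrite Rr Reps_refl.
Qed.

(* A matching of J inside a regular W extends to a point x outside W, which
   can be sent to a representative outside W. *)
Lemma matchable_ext (J W : {set T}) x :
  matchable J -> regular R W -> J \subset W -> x \notin W -> matchable (x |: J).
Proof.
case=> f injf fJ regW sJW notWx.
have [r Rr /andP[Rxr notWr]] := regular_escape regW notWx.
have fJW y : y \in J -> f y \in W.
  move=> Jy; have /andP[Rfy Ryfy] := fJ y Jy.
  exact: regular_reach regW (subsetP sJW y Jy) Rfy Ryfy.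
have neq y : y \in J -> (y == x) = false.
  by move=> Jy; apply/eqP => yx; rewrite -yx (subsetP sJW y Jy) in notWx.
have rfy y : y \in J -> r <> f y by move=> Jy rf; rewrite rf fJW in notWr.
exists (fun y => if y == x then r else f y).
- move=> y1 y2 /setU1P[-> | Jy1] /setU1P[-> | Jy2]; rewrite ?eqxx ?neq //.
  + by move/rfy.
  + by move/esym/rfy.
  + exact: injf.
- by move=> y /setU1P[-> | Jy]; rewrite ?eqxx ?Rr ?Rxr ?neq ?fJ.
Qed.

Lemma rank_ge (J V : {set T}) : J \subset V -> indep R J -> #|J| <= rank R V.
Proof.
move=> sJV indJ; rewrite /rank.
by apply: (@leq_bigmax_cond _ _ (fun I : {set T} => #|I|)); rewrite sJV.
Qed.

Lemma rank_le (X V : {set T}) : regular R X -> V \subset X -> rank R V <= h R X.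
Proof.
move=> regX sVX; apply/bigmax_leqP => I /andP[sIV /forall_inP/(_ X regX)].
by rewrite (setIidPl (subset_trans sIV sVX)).
Qed.

Lemma rank_eq_h (X J V : {set T}) : regular R X -> indep R J -> J \subset V -> V \subset X ->
  #|J| = h R X -> rank R V = h R X.
Proof.
move=> regX indJ sJV sVX cardJ.
by apply/eqP; rewrite eqn_leq rank_le //= -cardJ rank_ge.
Qed.

End SerialTransitive.

Theorem proposition9 (T : finType) (R : rel T)
  (hne : 0 < #|T|)
  (hserial : forall x : T, exists y : T, R x y)
  (htrans : transitive R)
  (n : nat) (hn1 : 1 <= n) (hn2 : n <= h R [set: T])
  (X Y : {set T}) (hX : regular R X) (hY : regular R Y)
  (hXn : h R X = n) (hYn : h R Y = n - 1) :
  forall Z : {set T}, Y \proper Z -> Z \proper X -> cl R Z = X.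
Proof.
move=> Z /properP[sYZ [z Zz notYz]] /properP[sZX _].
pose J := z |: (Y :&: Reps R).
have matchJ : matchable R J.
  apply: matchable_ext (subsetIl Y _) notYz => //.
  exact: matchable_reps (subsetIr _ _).
have indJ := matchable_indep hserial htrans matchJ.
have sJZ : J \subset Z by rewrite subUset sub1set Zz (subset_trans (subsetIl _ _) sYZ).
have cardJ : #|J| = h R X.
  by rewrite cardsU1 inE (negbTE notYz) -h_reps // hYn hXn; lia.
have rankZ : rank R Z = h R X := rank_eq_h hX indJ sJZ sZX cardJ.
apply/setP => u; rewrite inE rankZ.
have [Xu | notXu] := boolP (u \in X).
  by rewrite (rank_eq_h hX indJ (subset_trans sJZ (subsetUr _ _))) ?eqxx // subUset sub1set Xu.
have sJX := subset_trans sJZ sZX.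
have matchJu : matchable R (u |: J) := matchable_ext hserial htrans matchJ hX sJX notXu.
have := rank_ge (setUS [set u] sJZ) (matchable_indep hserial htrans matchJu).
rewrite cardsU1 (contra (subsetP sJX u) notXu) cardJ.
by case: eqP => // ->; rewrite ltnn.
Qed.
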